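(* Let $(p_{ij})_{i,j\in\{0,1\}}$ be a transition matrix with all $p_{ij}\in(0,1)$, and for $i\in\{0,1\}$, $n\in\mathbb N_0$ let $I_n^i$ be binomially $B(n,p_{i0})$ distributed. Let $(a_i(n))_{n\in\mathbb N_0}$, $(\varepsilon_i(n))_{n\in\mathbb N_0}$, $i\in\{0,1\}$, be real sequences satisfying $$a_i(n)=p_{i0}\mathbb E[a_0(I_n^i)]+p_{i1}\mathbb E[a_1(n-I_n^i)]+\varepsilon_i(n),\qquad i\in\{0,1\},\ n\in\mathbb N.$$ If $\varepsilon_i(n)=O(n^\alpha)$ for some $\alpha\in\mathbb R$ and both $i$, then as $n\to\infty$, $a_i(n)=O(1)$ if $\alpha<0$, $a_i(n)=O(n^\alpha)$ if $\alpha>0$, and $a_i(n)=O(\log n)$ if $\alpha=0$. *)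

From Stdlib Require Import Reals.
Open Scope R_scope.

Definition binom_exp (n : nat) (q : R) (f : nat -> R) : R :=
  sum_f_R0 (fun k => Binomial.C n k * q ^ k * (1 - q) ^ (n - k) * f k) n.

Definition bigO (f g : nat -> R) : Prop :=
  exists (C : R) (N : nat), forall n : nat, (N <= n)%nat -> Rabs (f n) <= C * Rabs (g n).

From Stdlib Require Import Reals Lra Lia.
Open Scope R_scope.

(* Compare a with f(n) = C G(n + 1) + D, where G = lyap alpha is ln for
   alpha = 0 and x^alpha / alpha otherwise.  Chebyshev's inequality keeps I_n^i
   near p_i0 n, and G(s x) = G(x) + x^alpha (G(s) - G(1)) with G(s) < G(1) for
   s < 1; hence p_i0 E G(I + 1) + p_i1 E G(n - I + 1) falls short of G(n + 1)
   by a constant multiple of (n + 1)^alpha, which for large C absorbs eps_i(n).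
   Strong induction then gives |a_i(n)| <= f(n): a_i(n) reappears on the
   right-hand side, but only with total weight p_i0^(n+1) + p_i1^(n+1) < 1.
   Finally G(n + 1) is O(1), O(n^alpha) or O(ln n) according to the sign of
   alpha. *)

Lemma ln_le_mono x y : 0 < x -> x <= y -> ln x <= ln y.
Proof. intros Hx [Hlt|<-]; [left; apply ln_increasing|]; lra. Qed.

Lemma exp_le_mono x y : x <= y -> exp x <= exp y.
Proof. intros [Hlt|<-]; [left; apply exp_increasing|]; lra. Qed.

Lemma Rpower_gt_0 x al : 0 < Rpower x al.
Proof. apply exp_pos. Qed.

Lemma Rpower_base_1 al : Rpower 1 al = 1.
Proof. unfold Rpower. rewrite ln_1, Rmult_0_r. apply exp_0. Qed.

Lemma Rpower_le_succ x al : 1 <= x ->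
  Rpower x al <= Rpower 2 (Rabs al) * Rpower (x + 1) al.
Proof.
  intros Hx. unfold Rpower. rewrite <- exp_plus. apply exp_le_mono.
  assert (ln x <= ln (x + 1)) by (apply ln_le_mono; lra).
  assert (ln (x + 1) <= ln 2 + ln x) by (rewrite <- ln_mult by lra; apply ln_le_mono; lra).
  assert (0 <= ln 2) by (rewrite <- ln_1; apply ln_le_mono; lra).
  destruct (Rle_or_lt 0 al).
  - rewrite Rabs_pos_eq by auto. nra.
  - rewrite Rabs_left by auto. nra.
Qed.

Lemma pow_add_compl_lt_1 q n : 0 < q < 1 -> (1 <= n)%nat ->
  q ^ S n + (1 - q) ^ S n < 1.
Proof.
  intros Hq Hn. simpl.
  assert (q ^ n < 1) by (apply pow_lt_1_compat; [lra | lia]).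
  assert ((1 - q) ^ n < 1) by (apply pow_lt_1_compat; [lra | lia]).
  nra.
Qed.

Lemma sum_f_R0_rev (f : nat -> R) n :
  sum_f_R0 (fun k => f (n - k)%nat) n = sum_f_R0 f n.
Proof.
  induction n as [|n IH]; [reflexivity|].
  rewrite decomp_sum, tech5 by lia. simpl pred. rewrite Nat.sub_0_r, <- IH.
  rewrite Rplus_comm. f_equal.
Qed.

Lemma sum_f_R0_ge_term (u : nat -> R) N n : (forall k, 0 <= u k) -> (n <= N)%nat ->
  u n <= sum_f_R0 u N.
Proof.
  intros Hu Hn. induction N as [|N IH].
  - replace n with 0%nat by lia. simpl. lra.
  - rewrite tech5. destruct (Nat.eq_dec n (S N)) as [->|Hne].
    + pose proof (cond_pos_sum u N Hu). lra.
    + pose proof (IH ltac:(lia)). pose proof (Hu (S N)). lra.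
Qed.

Definition eventually (P : nat -> Prop) : Prop :=
  exists N, forall n, (N <= n)%nat -> P n.

Lemma eventually_uniform_lt2 (P : nat -> R -> nat -> Prop) :
  (forall i, (i < 2)%nat -> exists c, eventually (fun n => forall C, c <= C -> P i C n)) ->
  exists C, 0 <= C /\ eventually (fun n => forall i, (i < 2)%nat -> P i C n).
Proof.
  intros HP.
  destruct (HP 0%nat ltac:(lia)) as [c0 [N0 H0]].
  destruct (HP 1%nat ltac:(lia)) as [c1 [N1 H1]].
  set (C := Rmax (Rmax c0 c1) 0).
  assert (Hc0 : c0 <= C) by (eapply Rle_trans; [apply Rmax_l | apply Rmax_l]).
  assert (Hc1 : c1 <= C) by (eapply Rle_trans; [apply Rmax_r | apply Rmax_l]).
  exists C. split; [apply Rmax_r|]. exists (N0 + N1)%nat.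
  intros n Hn [|[|i]] Hi; [apply H0 | apply H1 | lia]; auto; lia.
Qed.

Lemma bigO_rpower_succ (e : nat -> R) al :
  bigO e (fun n => Rpower (INR n) al) ->
  exists K, 0 <= K /\ eventually (fun n => Rabs (e n) <= K * Rpower (INR n + 1) al).
Proof.
  intros [C [N HC]].
  assert (H2 : 0 < Rpower 2 (Rabs al)) by apply Rpower_gt_0.
  exists (Rmax C 0 * Rpower 2 (Rabs al)). split.
  - apply Rmult_le_pos; [apply Rmax_r | lra].
  - exists (S N). intros n Hn.
    assert (H1 : 1 <= INR n) by (apply (le_INR 1); lia).
    pose proof (Rpower_le_succ (INR n) al H1).
    pose proof (Rpower_gt_0 (INR n) al).
    pose proof (Rmax_l C 0). pose proof (Rmax_r C 0).
    eapply Rle_trans; [apply HC; lia|].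
    rewrite Rabs_pos_eq by lra. nra.
Qed.

(** * Binomial expectations *)

Definition binom_weight (n : nat) (q : R) (k : nat) : R :=
  Binomial.C n k * q ^ k * (1 - q) ^ (n - k).

Lemma binom_expE n q f :
  binom_exp n q f = sum_f_R0 (fun k => binom_weight n q k * f k) n.
Proof. reflexivity. Qed.

Lemma C_pos n k : 0 < Binomial.C n k.
Proof.
  unfold Binomial.C. apply Rdiv_lt_0_compat; [apply INR_fact_lt_0|].
  apply Rmult_lt_0_compat; apply INR_fact_lt_0.
Qed.

Lemma binom_weight_nonneg n q k : 0 <= q <= 1 -> 0 <= binom_weight n q k.
Proof.
  intros Hq. unfold binom_weight.
  apply Rmult_le_pos; [apply Rmult_le_pos|]; [left; apply C_pos| |]; apply pow_le; lra.
Qed.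

Lemma binom_weight_last n q : binom_weight n q n = q ^ n.
Proof.
  unfold binom_weight, Binomial.C. rewrite Nat.sub_diag. simpl.
  field. apply INR_fact_neq_0.
Qed.

Lemma binom_weight_rev n q k : (k <= n)%nat ->
  binom_weight n q (n - k) = binom_weight n (1 - q) k.
Proof.
  intros Hk. unfold binom_weight. rewrite <- pascal_step1 by lia.
  replace (n - (n - k))%nat with k by lia. replace (1 - (1 - q)) with q by ring. ring.
Qed.

Lemma binom_exp_rev n q f :
  binom_exp n q (fun k => f (n - k)%nat) = binom_exp n (1 - q) f.
Proof.
  rewrite !binom_expE.
  rewrite <- (sum_f_R0_rev (fun k => binom_weight n q k * f (n - k)%nat)).
  apply sum_eq. intros k Hk.
  rewrite binom_weight_rev by lia. do 2 f_equal. lia.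
Qed.

Lemma binom_exp_const n q c : binom_exp n q (fun _ => c) = c.
Proof.
  unfold binom_exp. rewrite <- scal_sum, <- Binomial.binomial.
  replace (q + (1 - q)) with 1 by ring. rewrite pow1. ring.
Qed.

Lemma binom_exp_affine n q c d f :
  binom_exp n q (fun k => c * f k + d) = c * binom_exp n q f + d.
Proof.
  rewrite !binom_expE.
  transitivity (sum_f_R0 (fun k => binom_weight n q k * f k * c + binom_weight n q k * d) n).
  - apply sum_eq. intros. ring.
  - rewrite plus_sum.
    change (sum_f_R0 (fun k => binom_weight n q k * d) n) with (binom_exp n q (fun _ => d)).
    rewrite binom_exp_const, <- scal_sum. ring.
Qed.

Lemma binom_exp_plus n q f g :
  binom_exp n q (fun k => f k + g k) = binom_exp n q f + binom_exp n q g.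
Proof. rewrite !binom_expE, <- plus_sum. apply sum_eq. intros. ring. Qed.

Lemma binom_exp_ext n q f g :
  (forall k, (k <= n)%nat -> f k = g k) -> binom_exp n q f = binom_exp n q g.
Proof. intros Hfg. rewrite !binom_expE. apply sum_eq. intros k Hk. rewrite Hfg; auto. Qed.

Lemma binom_exp_le n q f g : 0 <= q <= 1 ->
  (forall k, (k <= n)%nat -> f k <= g k) -> binom_exp n q f <= binom_exp n q g.
Proof.
  intros Hq Hfg. rewrite !binom_expE. apply sum_Rle. intros k Hk.
  apply Rmult_le_compat_l; auto using binom_weight_nonneg.
Qed.

Lemma binom_exp_abs_le n q f : 0 <= q <= 1 ->
  Rabs (binom_exp n q f) <= binom_exp n q (fun k => Rabs (f k)).
Proof.
  intros Hq. rewrite !binom_expE. eapply Rle_trans; [apply Rsum_abs|].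
  right. apply sum_eq. intros k Hk.
  rewrite Rabs_mult, (Rabs_pos_eq (binom_weight n q k)); auto using binom_weight_nonneg.
Qed.

Lemma binom_exp_update_last n q g d :
  binom_exp n q (fun k => g k + if Nat.eqb k n then d else 0)
  = binom_exp n q g + q ^ n * d.
Proof.
  rewrite !binom_expE. destruct n as [|m].
  - simpl. unfold binom_weight, Binomial.C. simpl. field.
  - rewrite !tech5, Nat.eqb_refl, binom_weight_last.
    rewrite (sum_eq _ (fun k => binom_weight (S m) q k * g k)).
    + ring.
    + intros k Hk. rewrite (proj2 (Nat.eqb_neq k (S m))) by lia. ring.
Qed.

Lemma binom_exp_abs_le_excess n q f g d : 0 <= q <= 1 ->
  (forall k, (k < n)%nat -> Rabs (f k) <= g k) -> Rabs (f n) <= g n + d ->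
  Rabs (binom_exp n q f) <= binom_exp n q g + q ^ n * d.
Proof.
  intros Hq Hlt Hn. rewrite <- binom_exp_update_last.
  eapply Rle_trans; [apply binom_exp_abs_le; auto|].
  apply binom_exp_le; auto. intros k Hk.
  destruct (Nat.eqb_spec k n) as [->|Hkn]; [lra|].
  rewrite Rplus_0_r. apply Hlt. lia.
Qed.

Lemma C_succ_mul n j : (j <= n)%nat ->
  Binomial.C (S n) (S j) * INR (S j) = INR (S n) * Binomial.C n j.
Proof.
  intros Hj. unfold Binomial.C. replace (S n - S j)%nat with (n - j)%nat by lia.
  rewrite !fact_simpl, !mult_INR.
  assert (INR (S j) <> 0) by (apply not_0_INR; lia).
  field. split; auto using INR_fact_neq_0.
Qed.

Lemma binom_weight_succ n q j : (j <= n)%nat ->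
  binom_weight (S n) q (S j) * INR (S j) = INR (S n) * q * binom_weight n q j.
Proof.
  intros Hj. unfold binom_weight. replace (S n - S j)%nat with (n - j)%nat by lia.
  transitivity (Binomial.C (S n) (S j) * INR (S j) * q * q ^ j * (1 - q) ^ (n - j)).
  - simpl pow. ring.
  - rewrite C_succ_mul by exact Hj. ring.
Qed.

Lemma binom_exp_mul_index n q h :
  binom_exp (S n) q (fun k => INR k * h (k - 1)%nat) = INR (S n) * q * binom_exp n q h.
Proof.
  rewrite !binom_expE, decomp_sum by lia. simpl pred.
  rewrite Rmult_0_l, Rmult_0_r, Rplus_0_l, scal_sum.
  apply sum_eq. intros j Hj. rewrite Nat.sub_succ, Nat.sub_0_r.
  rewrite <- Rmult_assoc, binom_weight_succ by lia. ring.
Qed.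

Lemma binom_exp_mean n q : binom_exp n q INR = INR n * q.
Proof.
  destruct n as [|n]; [unfold binom_exp; simpl; ring|].
  rewrite (binom_exp_ext _ _ _ (fun k => INR k * (fun _ => 1) (k - 1)%nat))
    by (intros; cbv beta; ring).
  rewrite (binom_exp_mul_index n q (fun _ => 1)), binom_exp_const. ring.
Qed.

Lemma binom_exp_variance n q :
  binom_exp n q (fun k => (INR k - INR n * q) ^ 2) = INR n * q * (1 - q).
Proof.
  destruct n as [|n].
  - unfold binom_exp, Binomial.C. simpl. field.
  - set (m := INR (S n) * q).
    rewrite (binom_exp_ext _ _ _
      (fun k => INR k * INR (k - 1)%nat + ((1 - 2 * m) * INR k + m ^ 2))).
    + rewrite binom_exp_plus, binom_exp_affine, binom_exp_mul_index, !binom_exp_mean.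
      unfold m. rewrite S_INR. ring.
    + intros [|k] _; [simpl; ring|].
      rewrite Nat.sub_succ, Nat.sub_0_r, S_INR. ring.
Qed.

Lemma Rle_split_sq_dev h A B x m d : 0 < d -> A <= B ->
  (Rabs (x - m) < d -> h <= A) -> h <= B ->
  h <= (B - A) / d ^ 2 * (x - m) ^ 2 + A.
Proof.
  intros Hd HAB Hnear Hfar.
  assert (Hd2 : 0 < d ^ 2) by (apply pow_lt; lra).
  assert (Hslope : 0 <= (B - A) / d ^ 2)
    by (apply Rmult_le_pos; [lra | left; apply Rinv_0_lt_compat; lra]).
  destruct (Rlt_or_le (Rabs (x - m)) d) as [Hlt|Hge].
  - specialize (Hnear Hlt). assert (0 <= (x - m) ^ 2) by apply pow2_ge_0. nra.
  - assert (Hsq : d ^ 2 <= (x - m) ^ 2)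
      by (rewrite <- (pow2_abs (x - m)); apply pow_incr; lra).
    replace ((B - A) / d ^ 2 * (x - m) ^ 2 + A)
      with ((B - A) * ((x - m) ^ 2 / d ^ 2) + A) by (field; lra).
    assert (1 <= (x - m) ^ 2 / d ^ 2).
    { apply (Rmult_le_reg_r (d ^ 2)); [lra|]. unfold Rdiv.
      rewrite Rmult_assoc, Rinv_l; lra. }
    nra.
Qed.

Lemma binom_exp_le_split n q h A B d : 0 <= q <= 1 -> 0 < d -> A <= B ->
  (forall k, (k <= n)%nat -> Rabs (INR k - INR n * q) < d -> h k <= A) ->
  (forall k, (k <= n)%nat -> h k <= B) ->
  binom_exp n q h <= (B - A) / d ^ 2 * (INR n * q * (1 - q)) + A.
Proof.
  intros Hq Hd HAB Hnear Hfar. rewrite <- binom_exp_variance, <- binom_exp_affine.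
  apply binom_exp_le; auto. intros k Hk.
  apply Rle_split_sq_dev; auto.
Qed.

(** * The comparison function *)

(* An antiderivative of x^(al - 1): the function G of the header. *)
Definition lyap (al x : R) : R :=
  if Req_dec_T al 0 then ln x else Rpower x al / al.

Lemma lyap_le_mono al x y : 0 < x -> x <= y -> lyap al x <= lyap al y.
Proof.
  intros Hx Hxy. unfold lyap, Rpower. destruct (Req_dec_T al 0) as [_|Hal].
  - apply ln_le_mono; auto.
  - assert (Hln := ln_le_mono x y Hx Hxy). unfold Rdiv.
    destruct (Rlt_or_le al 0) as [Hneg|Hnneg].
    + assert (exp (al * ln y) <= exp (al * ln x)) by (apply exp_le_mono; nra).
      assert (/ al < 0) by (apply Rinv_lt_0_compat; auto). nra.
    + assert (exp (al * ln x) <= exp (al * ln y)) by (apply exp_le_mono; nra).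
      apply Rmult_le_compat_r; auto. left; apply Rinv_0_lt_compat; lra.
Qed.

Lemma lyap_mult al x y : 0 < x -> 0 < y ->
  lyap al (x * y) = lyap al y + Rpower y al * (lyap al x - lyap al 1).
Proof.
  intros Hx Hy. unfold lyap. destruct (Req_dec_T al 0) as [->|Hal].
  - rewrite Rpower_O, ln_mult, ln_1 by auto. ring.
  - rewrite <- Rpower_mult_distr, Rpower_base_1 by auto. field. auto.
Qed.

Lemma lyap_lt_1 al x : 0 < x < 1 -> lyap al x < lyap al 1.
Proof.
  intros Hx. assert (Hln : ln x < 0) by (rewrite <- ln_1; apply ln_increasing; lra).
  unfold lyap. rewrite Rpower_base_1, ln_1.
  destruct (Req_dec_T al 0) as [_|Hal]; [lra|]. unfold Rdiv, Rpower.
  destruct (Rlt_or_le al 0) as [Hneg|Hnneg].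
  - assert (exp 0 < exp (al * ln x)) by (apply exp_increasing; nra). rewrite exp_0 in *.
    assert (/ al < 0) by (apply Rinv_lt_0_compat; auto). nra.
  - assert (exp (al * ln x) < exp 0) by (apply exp_increasing; nra). rewrite exp_0 in *.
    assert (0 < / al) by (apply Rinv_0_lt_compat; lra). nra.
Qed.

(* Split at distance dl n from the mean q n: inside, I + 1 <= (q + dl) n + 1
   <= (q + 2 dl)(n + 1); outside, which by Chebyshev has mass at most
   q (1 - q) / (dl^2 n), use I + 1 <= n + 1, and lyap_mult converts both
   bounds into multiples of (n + 1)^al. *)
Lemma lyap_binom_exp_le al n q dl : 0 <= q <= 1 -> 0 < dl -> q + dl <= 1 ->
  1 <= dl * INR n ->
  binom_exp n q (fun k => lyap al (INR k + 1))
  <= lyap al (INR n + 1) + Rpower (INR n + 1) al *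
       ((lyap al (q + 2 * dl) - lyap al 1)
        - q * (1 - q) / (dl ^ 2 * INR n) * (lyap al (q + dl) - lyap al 1)).
Proof.
  intros Hq Hdl Hqdl Hdx. set (x := INR n) in *.
  assert (Hx : 0 < x) by nra.
  set (P := Rpower (x + 1) al). set (B := lyap al (x + 1)).
  set (A := lyap al ((q + dl) * x + 1)).
  set (r := q * (1 - q) / (dl ^ 2 * x)).
  assert (Hr : 0 <= r).
  { unfold r. apply Rmult_le_pos; [nra|]. left. apply Rinv_0_lt_compat. nra. }
  assert (Hsplit : binom_exp n q (fun k => lyap al (INR k + 1)) <= (B - A) * r + A).
  { replace ((B - A) * r) with ((B - A) / (dl * x) ^ 2 * (x * q * (1 - q)))
      by (unfold r; field; lra).
    apply binom_exp_le_split; auto; try nra.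
    - apply lyap_le_mono; nra.
    - intros k Hk Hnear. apply Rabs_def2 in Hnear. apply lyap_le_mono.
      + pose proof (pos_INR k). lra.
      + fold x in Hnear. nra.
    - intros k Hk. apply lyap_le_mono.
      + pose proof (pos_INR k). lra.
      + apply le_INR in Hk. fold x in Hk. lra. }
  assert (Hfar : A <= B + P * (lyap al (q + 2 * dl) - lyap al 1)).
  { unfold B, P. rewrite <- lyap_mult by lra. apply lyap_le_mono; nra. }
  assert (Hnear : B + P * (lyap al (q + dl) - lyap al 1) <= A).
  { unfold B, P. rewrite <- lyap_mult by lra. apply lyap_le_mono; nra. }
  assert ((B - A) * r <= - (P * (lyap al (q + dl) - lyap al 1)) * r)
    by (apply Rmult_le_compat_r; lra).
  fold r. lra.
Qed.

Definition lyap_mix (al q s : R) : R :=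
  q * (lyap al (q + s) - lyap al 1) + (1 - q) * (lyap al (1 - q + s) - lyap al 1).

Lemma lyap_mix_lt_0 al q s : 0 < q < 1 -> 0 < s -> q + s < 1 -> 1 - q + s < 1 ->
  lyap_mix al q s < 0.
Proof.
  intros Hq Hs Hqs Hqs'. unfold lyap_mix.
  assert (lyap al (q + s) < lyap al 1) by (apply lyap_lt_1; lra).
  assert (lyap al (1 - q + s) < lyap al 1) by (apply lyap_lt_1; lra).
  nra.
Qed.

Lemma lyap_binom_mix_le al n q dl : 0 < q < 1 -> 0 < dl -> q + dl <= 1 ->
  1 - q + dl <= 1 -> 1 <= dl * INR n ->
  q * binom_exp n q (fun k => lyap al (INR k + 1))
  + (1 - q) * binom_exp n (1 - q) (fun k => lyap al (INR k + 1))
  <= lyap al (INR n + 1) + Rpower (INR n + 1) al *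
       (lyap_mix al q (2 * dl) - q * (1 - q) / (dl ^ 2 * INR n) * lyap_mix al q dl).
Proof.
  intros Hq Hdl Hqdl Hqdl' Hdx.
  pose proof (lyap_binom_exp_le al n q dl ltac:(lra) Hdl Hqdl Hdx) as E0.
  pose proof (lyap_binom_exp_le al n (1 - q) dl ltac:(lra) Hdl Hqdl' Hdx) as E1.
  replace ((1 - q) * (1 - (1 - q))) with (q * (1 - q)) in E1 by ring.
  apply (Rmult_le_compat_l q) in E0; [|lra].
  apply (Rmult_le_compat_l (1 - q)) in E1; [|lra].
  unfold lyap_mix. lra.
Qed.

Lemma lyap_binom_drift al q : 0 < q < 1 ->
  exists c, 0 < c /\ eventually (fun n =>
    q * binom_exp n q (fun k => lyap al (INR k + 1))
    + (1 - q) * binom_exp n (1 - q) (fun k => lyap al (INR k + 1))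
    <= lyap al (INR n + 1) - c * Rpower (INR n + 1) al).
Proof.
  intros Hq.
  set (dl := Rmin q (1 - q) / 4).
  assert (Hdq : dl <= q / 4) by (pose proof (Rmin_l q (1 - q)); unfold dl; lra).
  assert (Hdq' : dl <= (1 - q) / 4) by (pose proof (Rmin_r q (1 - q)); unfold dl; lra).
  assert (Hdl : 0 < dl) by (unfold dl; apply Rmin_case; lra).
  set (gap := - lyap_mix al q (2 * dl)).
  assert (Hgap : 0 < gap) by (pose proof (lyap_mix_lt_0 al q (2 * dl)); unfold gap; lra).
  set (S := - lyap_mix al q dl).
  assert (HS : 0 <= S) by (pose proof (lyap_mix_lt_0 al q dl); unfold S; lra).
  set (V := q * (1 - q) / dl ^ 2).
  assert (HV : 0 <= V).
  { unfold V. apply Rmult_le_pos; [nra|]. left. apply Rinv_0_lt_compat, pow_lt. lra. }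
  assert (HVS : 0 <= 2 * V * S / gap)
    by (apply Rmult_le_pos; [nra | left; apply Rinv_0_lt_compat; lra]).
  assert (Hinv : 0 < / dl) by (apply Rinv_0_lt_compat; lra).
  destruct (INR_unbounded (/ dl + 2 * V * S / gap)) as [N HN].
  exists (gap / 2). split; [lra|]. exists N. intros n Hn.
  apply le_INR in Hn. set (x := INR n) in *.
  assert (Hx : 0 < x) by lra.
  assert (Hdx : 1 <= dl * x).
  { apply (Rmult_le_reg_l (/ dl)); [lra|].
    rewrite <- Rmult_assoc, Rinv_l, Rmult_1_l, Rmult_1_r; lra. }
  assert (Hrem : V / x * S <= gap / 2).
  { apply (Rmult_le_reg_l (2 * x / gap)).
    - apply Rmult_lt_0_compat; [lra | apply Rinv_0_lt_compat; lra].
    - replace (2 * x / gap * (V / x * S)) with (2 * V * S / gap) by (field; lra).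
      replace (2 * x / gap * (gap / 2)) with x by (field; lra). lra. }
  eapply Rle_trans; [apply (lyap_binom_mix_le al n q dl); auto; lra|]. fold x.
  replace (q * (1 - q) / (dl ^ 2 * x)) with (V / x) by (unfold V; field; lra).
  fold gap S. replace (lyap_mix al q (2 * dl)) with (- gap) by (unfold gap; ring).
  replace (lyap_mix al q dl) with (- S) by (unfold S; ring).
  assert (0 < Rpower (x + 1) al) by apply Rpower_gt_0.
  assert (Rpower (x + 1) al * (V / x * S) <= Rpower (x + 1) al * (gap / 2))
    by (apply Rmult_le_compat_l; lra).
  lra.
Qed.

(** * The two-type recursion *)

Section TwoTypeRecursion.

Variables (q : nat -> R) (a eps : nat -> nat -> R).

Hypothesis q_range : forall i, (i < 2)%nat -> 0 < q i < 1.

Hypothesis a_rec : forall i n, (i < 2)%nat -> (1 <= n)%nat ->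
  a i n = q i * binom_exp n (q i) (a 0%nat)
        + (1 - q i) * binom_exp n (1 - q i) (a 1%nat) + eps i n.

Definition supersolution (f : nat -> R) (i n : nat) : Prop :=
  q i * binom_exp n (q i) f + (1 - q i) * binom_exp n (1 - q i) f + Rabs (eps i n)
  <= f n.

Lemma abs_rec_le_excess f n d i : (i < 2)%nat -> (1 <= n)%nat ->
  (forall k j, (k < n)%nat -> (j < 2)%nat -> Rabs (a j k) <= f k) ->
  (forall j, (j < 2)%nat -> Rabs (a j n) <= f n + d) ->
  supersolution f i n ->
  Rabs (a i n) <= f n + d * (q i ^ S n + (1 - q i) ^ S n).
Proof.
  intros Hi Hn Hbelow Hat Hsup. unfold supersolution in Hsup.
  pose proof (q_range i Hi) as Hq.
  assert (E0 : Rabs (binom_exp n (q i) (a 0%nat))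
               <= binom_exp n (q i) f + q i ^ n * d).
  { apply binom_exp_abs_le_excess; [lra | intros k Hk | ]; auto. }
  assert (E1 : Rabs (binom_exp n (1 - q i) (a 1%nat))
               <= binom_exp n (1 - q i) f + (1 - q i) ^ n * d).
  { apply binom_exp_abs_le_excess; [lra | intros k Hk | ]; auto. }
  rewrite a_rec by auto.
  eapply Rle_trans; [apply Rabs_triang|].
  eapply Rle_trans; [apply Rplus_le_compat_r, Rabs_triang|].
  rewrite !Rabs_mult, (Rabs_pos_eq (q i)), (Rabs_pos_eq (1 - q i)) by lra.
  apply (Rmult_le_compat_l (q i)) in E0; [|lra].
  apply (Rmult_le_compat_l (1 - q i)) in E1; [|lra].
  simpl pow. lra.
Qed.

Lemma supersolution_dominates f N :
  (forall n i, (n <= N)%nat -> (i < 2)%nat -> Rabs (a i n) <= f n) ->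
  (forall n i, (N < n)%nat -> (i < 2)%nat -> supersolution f i n) ->
  forall n i, (i < 2)%nat -> Rabs (a i n) <= f n.
Proof.
  intros Hbase Hsup n. induction n as [n IH] using Wf_nat.lt_wf_ind.
  destruct (Compare_dec.le_lt_dec n N) as [Hle|Hgt]; [auto|].
  set (d := Rmax (Rabs (a 0%nat n)) (Rabs (a 1%nat n)) - f n).
  assert (Hat : forall j, (j < 2)%nat -> Rabs (a j n) <= f n + d).
  { intros [|[|j]] Hj; [pose proof (Rmax_l (Rabs (a 0%nat n)) (Rabs (a 1%nat n)))
                       | pose proof (Rmax_r (Rabs (a 0%nat n)) (Rabs (a 1%nat n))) | lia];
      unfold d; lra. }
  assert (Hstep : forall i, (i < 2)%nat ->
    Rabs (a i n) <= f n + d * (q i ^ S n + (1 - q i) ^ S n)).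
  { intros i Hi. apply abs_rec_le_excess; auto; try lia. }
  assert (Hd : d <= 0).
  { assert (Hmax : exists i, (i < 2)%nat /\ d = Rabs (a i n) - f n).
    { unfold d. apply Rmax_case_strong; intros _; [exists 0%nat | exists 1%nat]; split; auto. }
    destruct Hmax as [i [Hi Hdi]].
    pose proof (Hstep i Hi).
    pose proof (pow_add_compl_lt_1 (q i) n (q_range i Hi) ltac:(lia)).
    assert (0 <= q i ^ S n + (1 - q i) ^ S n)
      by (pose proof (q_range i Hi); apply Rplus_le_le_0_compat; apply pow_le; lra).
    nra. }
  intros i Hi. pose proof (Hat i Hi). lra.
Qed.

Lemma lyap_supersolution al i : (i < 2)%nat ->
  bigO (eps i) (fun n => Rpower (INR n) al) ->
  exists c, eventually (fun n => forall C, c <= C -> forall D,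
    supersolution (fun k => C * lyap al (INR k + 1) + D) i n).
Proof.
  intros Hi Heps.
  destruct (lyap_binom_drift al (q i) (q_range i Hi)) as [c [Hc [N1 Hdrift]]].
  destruct (bigO_rpower_succ (eps i) al Heps) as [K [HK [N2 Hnoise]]].
  exists (K / c), (N1 + N2)%nat. intros n Hn C HC D. unfold supersolution.
  rewrite !binom_exp_affine.
  specialize (Hdrift n ltac:(lia)). specialize (Hnoise n ltac:(lia)).
  set (P := Rpower (INR n + 1) al) in *.
  assert (HP : 0 < P) by apply Rpower_gt_0.
  assert (HC0 : 0 <= C)
    by (eapply Rle_trans; [|exact HC]; apply Rmult_le_pos; [lra | left; apply Rinv_0_lt_compat; lra]).
  assert (HKC : K <= C * c).
  { apply (Rmult_le_compat_r c) in HC; [|lra]. unfold Rdiv in HC.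
    rewrite Rmult_assoc, Rinv_l, Rmult_1_r in HC; lra. }
  apply (Rmult_le_compat_l C) in Hdrift; [|lra].
  assert (K * P <= C * c * P) by (apply Rmult_le_compat_r; lra).
  lra.
Qed.

Lemma abs_le_lyap al :
  (forall i, (i < 2)%nat -> bigO (eps i) (fun n => Rpower (INR n) al)) ->
  exists C D, 0 <= C /\
    forall i n, (i < 2)%nat -> Rabs (a i n) <= C * lyap al (INR n + 1) + D.
Proof.
  intros Heps.
  destruct (eventually_uniform_lt2 (fun i C n => forall D,
              supersolution (fun k => C * lyap al (INR k + 1) + D) i n))
    as [C [HC [N HN]]].
  { intros i Hi. apply lyap_supersolution; auto. }
  set (M := sum_f_R0 (fun n => Rabs (a 0%nat n) + Rabs (a 1%nat n)) N).
  exists C, (M - C * lyap al 1). split; auto.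
  intros i n Hi.
  apply (supersolution_dominates (fun k => C * lyap al (INR k + 1) + (M - C * lyap al 1)) N);
    auto.
  - intros k j Hk Hj.
    assert (Hlyap : lyap al 1 <= lyap al (INR k + 1))
      by (pose proof (pos_INR k); apply lyap_le_mono; lra).
    assert (Rabs (a j k) <= Rabs (a 0%nat k) + Rabs (a 1%nat k)).
    { pose proof (Rabs_pos (a 0%nat k)). pose proof (Rabs_pos (a 1%nat k)).
      destruct j as [|[|j]]; [lra | lra | lia]. }
    assert (Rabs (a 0%nat k) + Rabs (a 1%nat k) <= M).
    { apply (sum_f_R0_ge_term (fun m => Rabs (a 0%nat m) + Rabs (a 1%nat m))); auto.
      intros m. pose proof (Rabs_pos (a 0%nat m)). pose proof (Rabs_pos (a 1%nat m)). lra. }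
    apply (Rmult_le_compat_l C) in Hlyap; auto. lra.
  - intros k j Hk Hj. apply HN; auto. lia.
Qed.

End TwoTypeRecursion.

(** * From the comparison function to big-O bounds *)

Lemma bigO_lyap_neg al C D (u : nat -> R) : al < 0 -> 0 <= C ->
  (forall n, Rabs (u n) <= C * lyap al (INR n + 1) + D) -> bigO u (fun _ => 1).
Proof.
  intros Hal HC Hu. exists (Rmax D 0), 0%nat. intros n _.
  rewrite Rabs_R1, Rmult_1_r.
  assert (Hlyap : lyap al (INR n + 1) <= 0).
  { unfold lyap. destruct (Req_dec_T al 0) as [|_]; [lra|].
    pose proof (Rpower_gt_0 (INR n + 1) al).
    assert (/ al < 0) by (apply Rinv_lt_0_compat; auto). unfold Rdiv. nra. }
  pose proof (Rmax_l D 0). pose proof (Hu n). nra.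
Qed.

Lemma bigO_lyap_pos al C D (u : nat -> R) : 0 < al -> 0 <= C ->
  (forall n, Rabs (u n) <= C * lyap al (INR n + 1) + D) ->
  bigO u (fun n => Rpower (INR n) al).
Proof.
  intros Hal HC Hu. exists (C / al * Rpower 2 al + Rabs D), 1%nat. intros n Hn.
  apply (le_INR 1) in Hn. simpl INR in Hn.
  rewrite (Rabs_pos_eq (Rpower (INR n) al)) by (left; apply Rpower_gt_0).
  assert (Hsucc : Rpower (INR n + 1) al <= Rpower 2 al * Rpower (INR n) al).
  { rewrite Rpower_mult_distr by lra. apply Rle_Rpower_l; lra. }
  assert (Hge1 : 1 <= Rpower (INR n) al).
  { rewrite <- (Rpower_base_1 al). apply Rle_Rpower_l; lra. }
  assert (Hlyap : lyap al (INR n + 1) = Rpower (INR n + 1) al / al).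
  { unfold lyap. destruct (Req_dec_T al 0); [lra | reflexivity]. }
  assert (HCal : 0 <= C / al) by (apply Rmult_le_pos; [lra | left; apply Rinv_0_lt_compat; lra]).
  assert (C * lyap al (INR n + 1) <= C / al * Rpower 2 al * Rpower (INR n) al).
  { rewrite Hlyap. replace (C * (Rpower (INR n + 1) al / al))
      with (C / al * Rpower (INR n + 1) al) by (field; lra).
    rewrite Rmult_assoc. apply Rmult_le_compat_l; auto. }
  pose proof (Rle_abs D). pose proof (Rabs_pos D). pose proof (Hu n). nra.
Qed.

Lemma bigO_lyap_zero C D (u : nat -> R) : 0 <= C ->
  (forall n, Rabs (u n) <= C * lyap 0 (INR n + 1) + D) ->
  bigO u (fun n => ln (INR n)).
Proof.
  intros HC Hu. pose proof ln_lt_2 as Hln2.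
  exists (2 * C + Rabs D / ln 2), 2%nat. intros n Hn.
  apply (le_INR 2) in Hn. replace (INR 2) with 2 in Hn by (simpl; ring).
  assert (Hlnn : ln 2 <= ln (INR n)) by (apply ln_le_mono; lra).
  rewrite (Rabs_pos_eq (ln (INR n))) by lra.
  assert (Hlyap : lyap 0 (INR n + 1) <= 2 * ln (INR n)).
  { unfold lyap. destruct (Req_dec_T 0 0) as [_|]; [|lra].
    replace (2 * ln (INR n)) with (ln (INR n * INR n)) by (rewrite ln_mult by lra; ring).
    apply ln_le_mono; nra. }
  assert (Rabs D <= Rabs D / ln 2 * ln (INR n)).
  { replace (Rabs D) with (Rabs D / ln 2 * ln 2) at 1 by (field; lra).
    apply Rmult_le_compat_l; auto.
    apply Rmult_le_pos; [apply Rabs_pos | left; apply Rinv_0_lt_compat; lra]. }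
  pose proof (Rle_abs D). pose proof (Hu n).
  apply (Rmult_le_compat_l C) in Hlyap; auto. nra.
Qed.

Theorem lemma4p3
  (p : nat -> nat -> R)
  (Hp : forall i j : nat, (i < 2)%nat -> (j < 2)%nat -> 0 < p i j < 1)
  (Hrow : forall i : nat, (i < 2)%nat -> p i 0%nat + p i 1%nat = 1)
  (a eps : nat -> nat -> R)
  (Hrec : forall i n : nat, (i < 2)%nat -> (1 <= n)%nat ->
     a i n = p i 0%nat * binom_exp n (p i 0%nat) (fun k => a 0%nat k)
           + p i 1%nat * binom_exp n (p i 0%nat) (fun k => a 1%nat (n - k)%nat)
           + eps i n)
  (alpha : R)
  (Heps : forall i : nat, (i < 2)%nat -> bigO (eps i) (fun n => Rpower (INR n) alpha)) :
  forall i : nat, (i < 2)%nat ->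
    (alpha < 0 -> bigO (a i) (fun _ => 1)) /\
    (alpha > 0 -> bigO (a i) (fun n => Rpower (INR n) alpha)) /\
    (alpha = 0 -> bigO (a i) (fun n => ln (INR n))).
Proof.
  assert (Hq : forall i, (i < 2)%nat -> 0 < p i 0%nat < 1) by (intros i Hi; apply Hp; lia).
  assert (Hrec' : forall i n, (i < 2)%nat -> (1 <= n)%nat ->
    a i n = p i 0%nat * binom_exp n (p i 0%nat) (a 0%nat)
          + (1 - p i 0%nat) * binom_exp n (1 - p i 0%nat) (a 1%nat) + eps i n).
  { intros i n Hi Hn. rewrite Hrec, binom_exp_rev by auto.
    replace (p i 1%nat) with (1 - p i 0%nat) by (pose proof (Hrow i Hi); lra).
    reflexivity. }
  destruct (abs_le_lyap (fun i => p i 0%nat) a eps Hq Hrec' alpha Heps)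
    as [C [D [HC Hbound]]].
  intros i Hi. repeat split; intros Hal.
  - exact (bigO_lyap_neg alpha C D (a i) Hal HC (fun n => Hbound i n Hi)).
  - exact (bigO_lyap_pos alpha C D (a i) Hal HC (fun n => Hbound i n Hi)).
  - subst alpha. exact (bigO_lyap_zero C D (a i) HC (fun n => Hbound i n Hi)).
Qed.
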